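(* Let $\lambda_1,\lambda_2$ be as in the context and, for each $c>0$, let $\widetilde{\theta_c}$ be the unique $\theta\in(0,\frac{\pi}{2})\cap(0,\theta_c^+)$ with $H(c,\theta)=0$. Then $\lim_{c\to+\infty}\widetilde{\theta_c}=\frac{\pi}{2}$.
   Context: Either $\lambda_1>\lambda_2>0$ or $\lambda_1=\lambda_2=1$. For $c>0$ put $\theta_c^+=\pi$ if $c>\sqrt2\lambda_1$ and $\theta_c^+=\arccos(1-c^2/\lambda_1^2)$ if $0<c\le\sqrt2\lambda_1$; $\Omega=\{(c,\theta): c>0,\ |\theta|<\theta_c^+\}$. For $(c,\theta)\in\Omega$: $D=\sin\theta/c$; $\varphi$ is the global solution of $\varphi'(u)=\sqrt{c^2+2\cos\theta\,B(u)-D^2B(u)^2}$, $\varphi(0)=0$, where $B(u)=\lambda_1^2\cos^2\varphi(u)+\lambda_2^2\sin^2\varphi(u)$; $U>0$ is the unique number with $\varphi(U)=\pi$; $f$ solves $f'(u)=DB(u)$, $f(0)=0$; $G(u)=\int_0^u\frac{c-\varphi'(s)}{B(s)}ds$; $H(c,\theta)=Df(U)+cG(U)$. For every $c>0$ there is exactly one $\theta\in(0,\pi/2)\cap(0,\theta_c^+)$ with $H(c,\theta)=0$. *)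

From Stdlib Require Import Reals.
From Coquelicot Require Import Coquelicot.
Open Scope R_scope.

Definition lambdas_ok (l1 l2 : R) : Prop :=
  (l1 > l2 /\ l2 > 0) \/ (l1 = 1 /\ l2 = 1).

Definition theta_plus (l1 c : R) : R :=
  if Rlt_dec (sqrt 2 * l1) c then PI else acos (1 - c ^ 2 / l1 ^ 2).

Definition Dcoef (c th : R) : R := sin th / c.

Definition Bfun (l1 l2 : R) (phi : R -> R) (u : R) : R :=
  l1 ^ 2 * (cos (phi u)) ^ 2 + l2 ^ 2 * (sin (phi u)) ^ 2.

Definition is_phi_sol (l1 l2 c th : R) (phi : R -> R) : Prop :=
  phi 0 = 0 /\
  forall u : R,
    is_derive phi u
      (sqrt (c ^ 2 + 2 * cos th * Bfun l1 l2 phi u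
             - (Dcoef c th) ^ 2 * (Bfun l1 l2 phi u) ^ 2)).

Definition is_f_sol (l1 l2 c th : R) (phi f : R -> R) : Prop :=
  f 0 = 0 /\ forall u : R, is_derive f u (Dcoef c th * Bfun l1 l2 phi u).

Definition Gfun (l1 l2 c : R) (phi : R -> R) (u : R) : R :=
  RInt (fun s => (c - Derive phi s) / Bfun l1 l2 phi s) 0 u.

Definition H_is (l1 l2 c th h : R) : Prop :=
  exists (phi f : R -> R) (U : R),
    is_phi_sol l1 l2 c th phi /\ 0 < U /\ phi U = PI /\
    is_f_sol l1 l2 c th phi f /\
    h = Dcoef c th * f U + c * Gfun l1 l2 c phi U.

(* If cos θ stays above some e > 0 while c grows, then φ' = √(c² + 2 cos θ B - D²B²) exceeds c
   by at least e λ₂²/(3c), so c G(U) ≤ -e λ₂² U/(3λ₁²), whereas D f(U) = D² ∫₀ᵁ B ≤ λ₁² U/c².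
   Hence H(c, θ) < 0 for c large, and the zero of H(c, ·) in (0, π/2) must approach π/2. *)
From Stdlib Require Import Reals Lra Psatz.
From Coquelicot Require Import Coquelicot.
Open Scope R_scope.

Lemma lambdas_ok_bounds (l1 l2 : R) : lambdas_ok l1 l2 -> 0 < l2 <= l1.
Proof. unfold lambdas_ok; lra. Qed.

Lemma sqrt_sub_ge (c a q : R) :
  0 < c -> 0 <= a -> c ^ 2 + a <= q <= 4 * c ^ 2 -> a / (3 * c) <= sqrt q - c.
Proof.
  intros hc ha [hq1 hq2].
  assert (hs : sqrt q * sqrt q = q) by (apply sqrt_sqrt; nra).
  pose proof (sqrt_pos q) as hs0.
  assert (hcs : c <= sqrt q) by nra.
  assert (hs2 : sqrt q <= 2 * c) by nra.
  apply Rmult_le_reg_r with (3 * c); [lra |].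
  replace (a / (3 * c) * (3 * c)) with a by (field; lra).
  nra.
Qed.

Lemma RInt_le_const (g : R -> R) (a b K : R) :
  a <= b -> ex_RInt g a b -> (forall x, a < x < b -> g x <= K) ->
  RInt g a b <= K * (b - a).
Proof.
  intros hab hg hK.
  apply Rle_trans with (RInt (fun _ => K) a b).
  - apply RInt_le; auto using ex_RInt_const.
  - rewrite RInt_const. unfold scal; simpl; unfold mult; simpl. lra.
Qed.

Lemma is_derive_le_mean (f df : R -> R) (a b M : R) :
  a <= b -> (forall x, is_derive f x (df x)) -> (forall x, a <= x <= b -> df x <= M) ->
  f b - f a <= M * (b - a).
Proof.
  intros hab hf hM.
  destruct (MVT_gen f a b df) as (xi & hxi & ->).
  - intros x _. apply hf.
  - intros x _. apply continuity_pt_filterlim.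
    apply (ex_derive_continuous (V := R_NormedModule)). eexists. apply hf.
  - rewrite Rmin_left, Rmax_right in hxi by lra.
    apply Rmult_le_compat_r; [lra | auto].
Qed.

Definition B_angle (l1 l2 x : R) : R := l1 ^ 2 * cos x ^ 2 + l2 ^ 2 * sin x ^ 2.

Lemma B_angle_bounds (l1 l2 x : R) : 0 < l2 <= l1 -> l2 ^ 2 <= B_angle l1 l2 x <= l1 ^ 2.
Proof.
  intros hl. unfold B_angle. pose proof (sin2_cos2 x) as h. unfold Rsqr in h.
  assert (l2 ^ 2 <= l1 ^ 2) by nra.
  split; nra.
Qed.

Lemma Dcoef_sq_mul_sq_le (c th : R) : c <> 0 -> Dcoef c th ^ 2 * c ^ 2 <= 1.
Proof.
  intros hc. unfold Dcoef.
  replace ((sin th / c) ^ 2 * c ^ 2) with (sin th ^ 2) by (field; auto).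
  pose proof (sin2_cos2 th) as h. unfold Rsqr in h. nra.
Qed.

Definition radicand (l1 l2 c th x : R) : R :=
  c ^ 2 + 2 * cos th * B_angle l1 l2 x - Dcoef c th ^ 2 * B_angle l1 l2 x ^ 2.

(* G'(u) = G_rate (φ u): the ODE makes φ' = √(radicand (φ u)), and B(u) = B_angle (φ u). *)
Definition G_rate (l1 l2 c th x : R) : R :=
  (c - sqrt (radicand l1 l2 c th x)) / B_angle l1 l2 x.

Section LargeSpeed.

Variables (l1 l2 c th e : R).
Hypothesis hl : 0 < l2 <= l1.
Hypothesis he : 0 < e.
Hypothesis hc : 0 < c.
Hypothesis hcos : e <= cos th.
Hypothesis hlc : l1 ^ 2 <= e * c ^ 2.

Lemma radicand_bounds (x : R) :
  c ^ 2 + e * l2 ^ 2 <= radicand l1 l2 c th x <= 4 * c ^ 2.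
Proof.
  pose proof (Dcoef_sq_mul_sq_le c th ltac:(lra)) as hD.
  pose proof (pow2_ge_0 (Dcoef c th)) as hD0.
  destruct (B_angle_bounds l1 l2 x hl) as [hB0 hB1].
  pose proof (COS_bound th) as hcs.
  unfold radicand. set (B := B_angle l1 l2 x) in *. set (d := Dcoef c th ^ 2) in *.
  (* d B <= d l1^2 <= d e c^2 <= e: the quadratic term eats at most half of 2 cos θ B *)
  assert (hdB : d * B <= e) by (assert (d * B * c ^ 2 <= e * c ^ 2) by nra; nra).
  split; nra.
Qed.

Lemma G_rate_le (x : R) : G_rate l1 l2 c th x <= - (e * l2 ^ 2 / (3 * c * l1 ^ 2)).
Proof.
  destruct (B_angle_bounds l1 l2 x hl) as [hB0 hB1].
  assert (hl2 : 0 < l2 ^ 2) by (apply pow_lt; lra).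
  pose proof (sqrt_sub_ge c (e * l2 ^ 2) _ hc ltac:(nra) (radicand_bounds x)) as hs.
  unfold G_rate. set (B := B_angle l1 l2 x) in *.
  assert (hk : 0 < e * l2 ^ 2 / (3 * c)) by (apply Rdiv_lt_0_compat; nra).
  replace (e * l2 ^ 2 / (3 * c * l1 ^ 2)) with (e * l2 ^ 2 / (3 * c) / l1 ^ 2) by (field; nra).
  set (k := e * l2 ^ 2 / (3 * c)) in *.
  unfold Rdiv. apply Rle_trans with (- k * / B).
  - apply Rmult_le_compat_r; [left; apply Rinv_0_lt_compat |]; lra.
  - rewrite <- !Ropp_mult_distr_l. apply Ropp_le_contravar, Rmult_le_compat_l; [lra |].
    apply Rinv_le_contravar; lra.
Qed.

Lemma G_rate_derivable (x : R) : ex_derive (G_rate l1 l2 c th) x.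
Proof.
  pose proof (radicand_bounds x). destruct (B_angle_bounds l1 l2 x hl).
  unfold G_rate, radicand, B_angle in *. auto_derive. repeat split; nra.
Qed.

Section Solution.

Variable phi : R -> R.
Hypothesis hphi : is_phi_sol l1 l2 c th phi.

Lemma Gfun_le (U : R) : 0 <= U -> Gfun l1 l2 c phi U <= - (e * l2 ^ 2 / (3 * c * l1 ^ 2)) * U.
Proof.
  intros hU. destruct hphi as [_ hdphi].
  assert (hG : Gfun l1 l2 c phi U = RInt (fun s => G_rate l1 l2 c th (phi s)) 0 U).
  { apply RInt_ext. intros x _. rewrite (is_derive_unique _ _ _ (hdphi x)). reflexivity. }
  rewrite hG. rewrite <- (Rminus_0_r U) at 2.
  apply RInt_le_const; [lra | | intros; apply G_rate_le].
  apply (ex_RInt_continuous (V := R_CompleteNormedModule)). intros z _.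
  apply (ex_derive_continuous (V := R_NormedModule)), ex_derive_comp.
  - apply G_rate_derivable.
  - eexists. apply hdphi.
Qed.

Lemma Dcoef_mul_f_le (f : R -> R) (U : R) :
  0 <= U -> is_f_sol l1 l2 c th phi f -> Dcoef c th * f U <= l1 ^ 2 / c ^ 2 * U.
Proof.
  intros hU [hf0 hdf].
  set (D := Dcoef c th).
  assert (hDf : forall u, is_derive (fun u => D * f u) u (D * (D * Bfun l1 l2 phi u))).
  { intro u. apply (is_derive_scal f u D), hdf. }
  pose proof (is_derive_le_mean _ _ 0 U (l1 ^ 2 / c ^ 2) hU hDf) as hmean.
  simpl in hmean. rewrite hf0, Rmult_0_r, !Rminus_0_r in hmean.
  enough (hrate : forall u, D * (D * Bfun l1 l2 phi u) <= l1 ^ 2 / c ^ 2)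
    by exact (hmean (fun u _ => hrate u)).
  intro u. destruct (B_angle_bounds l1 l2 (phi u) hl) as [_ hB].
  pose proof (Dcoef_sq_mul_sq_le c th ltac:(lra)) as hD. pose proof (pow2_ge_0 D).
  change (Bfun l1 l2 phi u) with (B_angle l1 l2 (phi u)).
  apply Rmult_le_reg_r with (c ^ 2); [nra |].
  replace (l1 ^ 2 / c ^ 2 * c ^ 2) with (l1 ^ 2) by (field; lra).
  fold D in hD. nra.
Qed.

End Solution.

Lemma H_is_neg (h : R) : 3 * l1 ^ 4 < e * l2 ^ 2 * c ^ 2 -> H_is l1 l2 c th h -> h < 0.
Proof.
  intros hc2 (phi & f & U & hphi & hU & _ & hf & ->).
  assert (hl1 : 0 < l1 ^ 2) by (apply pow_lt; lra).
  assert (hcc : 0 < c ^ 2) by (apply pow_lt; lra).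
  pose proof (Dcoef_mul_f_le phi f U ltac:(lra) hf) as hDf.
  pose proof (Gfun_le phi hphi U ltac:(lra)) as hG.
  assert (hgap : l1 ^ 2 / c ^ 2 < e * l2 ^ 2 / (3 * l1 ^ 2)).
  { apply Rmult_lt_reg_r with (3 * c ^ 2 * l1 ^ 2); [nra |].
    replace (l1 ^ 2 / c ^ 2 * (3 * c ^ 2 * l1 ^ 2)) with (3 * l1 ^ 4) by (field; nra).
    replace (e * l2 ^ 2 / (3 * l1 ^ 2) * (3 * c ^ 2 * l1 ^ 2)) with (e * l2 ^ 2 * c ^ 2)
      by (field; nra).
    lra. }
  assert (hcG : c * Gfun l1 l2 c phi U <= - (e * l2 ^ 2 / (3 * l1 ^ 2)) * U).
  { replace (- (e * l2 ^ 2 / (3 * l1 ^ 2)) * U)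
      with (c * (- (e * l2 ^ 2 / (3 * c * l1 ^ 2)) * U)) by (field; nra).
    apply Rmult_le_compat_l; lra. }
  nra.
Qed.

End LargeSpeed.

Lemma cos_lt_of_H_is_zero (l1 l2 e : R) :
  0 < l2 <= l1 -> 0 < e ->
  exists C, forall c th, C < c -> H_is l1 l2 c th 0 -> cos th < e.
Proof.
  intros hl he.
  assert (hl2 : 0 < l2 ^ 2) by nra.
  assert (h1 : 0 <= l1 ^ 2 / e) by (apply Rdiv_le_0_compat; nra).
  assert (h2 : 0 <= 3 * l1 ^ 4 / (e * l2 ^ 2)) by (apply Rdiv_le_0_compat; nra).
  exists (1 + l1 ^ 2 / e + 3 * l1 ^ 4 / (e * l2 ^ 2)).
  intros c th hC hH. apply Rnot_le_lt. intros hcos.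
  assert (hcc : c < c ^ 2) by nra.
  assert (hlc : l1 ^ 2 <= e * c ^ 2).
  { apply Rmult_le_reg_r with (/ e); [apply Rinv_0_lt_compat; lra |].
    replace (e * c ^ 2 * / e) with (c ^ 2) by (field; lra). unfold Rdiv in h1. nra. }
  assert (hc2 : 3 * l1 ^ 4 < e * l2 ^ 2 * c ^ 2).
  { apply Rmult_lt_reg_r with (/ (e * l2 ^ 2)); [apply Rinv_0_lt_compat; nra |].
    replace (e * l2 ^ 2 * c ^ 2 * / (e * l2 ^ 2)) with (c ^ 2) by (field; nra).
    unfold Rdiv in h2. nra. }
  exact (Rlt_irrefl 0 (H_is_neg l1 l2 c th e hl he ltac:(lra) hcos hlc 0 hc2 hH)).
Qed.

Theorem lemma5p3 (l1 l2 : R) (theta_t : R -> R) :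
  lambdas_ok l1 l2 ->
  (forall c : R, 0 < c ->
     0 < theta_t c /\ theta_t c < PI / 2 /\ theta_t c < theta_plus l1 c /\
     H_is l1 l2 c (theta_t c) 0) ->
  is_lim theta_t p_infty (PI / 2).
Proof.
  intros hl Hth. apply is_lim_spec. intros eps. simpl.
  pose proof (cond_pos eps) as heps. pose proof PI_RGT_0.
  destruct (Rle_lt_dec (PI / 2) eps) as [hbig | hsmall].
  { exists 0. intros c hc. destruct (Hth c hc) as (h0 & h1 & _).
    rewrite Rabs_left; lra. }
  destruct (cos_lt_of_H_is_zero l1 l2 (sin eps) (lambdas_ok_bounds l1 l2 hl))
    as [C hC]; [apply sin_gt_0; lra |].
  exists (Rmax C 0). intros c hc.
  destruct (Hth c ltac:(pose proof (Rmax_r C 0); lra)) as (h0 & h1 & _ & hH).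
  pose proof (hC c _ ltac:(pose proof (Rmax_l C 0); lra) hH) as hcos.
  rewrite <- cos_shift in hcos.
  assert (PI / 2 - eps < theta_t c) by (apply Rnot_le_lt; intros hle; apply cos_decr_1 in hle; lra).
  rewrite Rabs_left; lra.
Qed.
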